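(* Let $\alpha\in(0,1)$ be constant. Suppose $(p_a(t))_{a\in\mathcal A}$ satisfies $p_a(t)>0$ for all $a$ and $\sum_a p_a(t)=1$, and $(p_a(t+1))_{a\in\mathcal A}$ is obtained by one SAMBA update with learning rate $\alpha$. Then $p_a(t+1)>0$ for all $a\in\mathcal A$ and $\sum_a p_a(t+1)=1$.
   Context: One SAMBA update: $a_\star(t)$ is an arm maximizing $p_a(t)$, $p_\star(t)=p_{a_\star(t)}(t)$. Exactly one arm is played; $I_a(t)\in\{0,1\}$ indicates that arm $a$ is played, with $\sum_a I_a(t)=1$; rewards $R_a(t)\in\{0,1\}$; $I_\star(t)=I_{a_\star(t)}(t)$, $R_\star(t)=R_{a_\star(t)}(t)$. For $a\ne a_\star(t)$: $p_a(t+1)=p_a(t)+\alpha p_a(t)^2\big[\frac{I_a(t)R_a(t)}{p_a(t)}-\frac{I_\star(t)R_\star(t)}{p_\star(t)}\big]$, and $p_{a_\star(t)}(t+1)=1-\sum_{a\ne a_\star(t)}p_a(t+1)$. *)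

From mathcomp Require Import all_boot all_order all_algebra.
Set Implicit Arguments. Unset Strict Implicit. Unset Printing Implicit Defensive.
Import Order.TTheory GRing.Theory Num.Theory.
Local Open Scope ring_scope.

(* One SAMBA update.  [p] : current probabilities, [astar] : the leading arm
   (an arm maximizing p), [I a] : indicator that arm a is played (0/1),
   [Rw a] : reward of arm a (0/1), [alpha] : learning rate. *)
Definition samba_update (A : finType) (R : fieldType)
    (alpha : R) (p : A -> R) (astar : A) (I Rw : A -> bool) : A -> R :=
  let nonleader a :=
    p a + alpha * p a ^+ 2 *
      ((I a)%:R * (Rw a)%:R / p a - (I astar)%:R * (Rw astar)%:R / p astar) in
  fun a => if a == astar then 1 - \sum_(b | b != astar) nonleader b
           else nonleader a.

From mathcomp Require Import all_boot all_order all_algebra.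
From mathcomp Require Import ring lra.
Import Order.TTheory GRing.Theory Num.Theory.
Local Open Scope ring_scope.

(* The leader absorbs whatever mass the other arms do not carry, so the total
   stays 1 by construction.  A non-leader [a] has its probability multiplied by
   [1 + alpha I_a R_a - alpha (p a / p astar) I_astar R_astar]; as only one arm
   is played, at most one of the two reward terms is present, and
   [p a <= p astar] bounds the factor below by [1 - alpha > 0].  Each non-leader
   grows by at most [alpha (p astar) I_a], so together they carry at most
   [1 - p astar + alpha (p astar) < 1], which leaves the leader a positive mass. *)

Section Update.

Variables (A : finType) (R : fieldType) (alpha : R) (p : A -> R) (astar : A).
Variables (I Rw : A -> bool).

Lemma samba_update_leaderE :
  samba_update alpha p astar I Rw astar =
  1 - \sum_(b | b != astar) samba_update alpha p astar I Rw b.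
Proof.
rewrite {1}/samba_update eqxx.
by under [in RHS]eq_bigr => b /negbTE nb do rewrite /samba_update nb.
Qed.

Lemma samba_update_sum : \sum_a samba_update alpha p astar I Rw a = 1.
Proof. by rewrite (bigD1 astar) //= samba_update_leaderE subrK. Qed.

Lemma samba_update_nonleaderE a : a != astar ->
  samba_update alpha p astar I Rw a =
  p a * (1 + alpha * ((I a)%:R * (Rw a)%:R)
           - alpha * (p a / p astar) * ((I astar)%:R * (Rw astar)%:R)).
Proof.
move=> /negbTE na; rewrite /samba_update na.
have [->|pa0] := eqVneq (p a) 0; first by rewrite expr0n /= mulr0 !mul0r addr0.
have paV : p a * (p a)^-1 = 1 := mulfV pa0.
ring: paV.
Qed.

End Update.

Lemma sum_indicator_eq1_excl (A : finType) (R : numDomainType) (I : A -> bool)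
    a b :
  \sum_c ((I c)%:R : R) = 1 -> a != b -> ~~ (I a && I b).
Proof.
move=> hI neq_ab; apply/negP => /andP[Ia Ib].
have : (I a)%:R + (I b)%:R <= \sum_c ((I c)%:R : R).
  rewrite (bigD1 a) //= (bigD1 b) 1?eq_sym //= addrA lerDl.
  by apply: sumr_ge0 => c _; exact: ler0n.
by rewrite hI Ia Ib -natrD lern1.
Qed.

Lemma samba_factor_gt0 (R : realFieldType) (alpha r : R) (i ri j rj : bool) :
  0 <= alpha < 1 -> 0 <= r <= 1 -> ~~ (i && j) ->
  0 < 1 + alpha * (i%:R * ri%:R) - alpha * r * (j%:R * rj%:R).
Proof.
by move=> /andP[? ?] /andP[? ?]; case: i j ri rj => [] [] [] [] //=; nra.
Qed.

Section Positivity.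

Variables (A : finType) (R : realFieldType) (alpha : R) (p : A -> R).
Variables (astar : A) (I Rw : A -> bool).
Hypotheses (alpha_ge0 : 0 <= alpha) (alpha_lt1 : alpha < 1).
Hypotheses (p_gt0 : forall a, 0 < p a) (p_le_leader : forall a, p a <= p astar).
Hypothesis p_sum1 : \sum_a p a = 1.
Hypothesis played_once : \sum_a ((I a)%:R : R) = 1.

Lemma samba_update_nonleader_gt0 a : a != astar ->
  0 < samba_update alpha p astar I Rw a.
Proof.
move=> na; rewrite samba_update_nonleaderE // mulr_gt0 //.
apply: samba_factor_gt0; first by rewrite alpha_ge0.
  by rewrite divr_ge0 ?(ltW (p_gt0 _)) //= ler_pdivrMr // mul1r.
exact: sum_indicator_eq1_excl played_once na.
Qed.

Lemma samba_update_nonleader_le a : a != astar ->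
  samba_update alpha p astar I Rw a <= p a + alpha * p astar * (I a)%:R.
Proof.
move=> na; rewrite samba_update_nonleaderE //.
have := mulr_ge0 (mulr_ge0 alpha_ge0 (ltW (p_gt0 a)))
  (divr_ge0 (ltW (p_gt0 a)) (ltW (p_gt0 astar))).
have := ler_wpM2l alpha_ge0 (p_le_leader a).
have := mulr_ge0 alpha_ge0 (ltW (p_gt0 astar)); have := p_gt0 a.
move: (p a / p astar) => r.
by case: (I a) (Rw a) (I astar) (Rw astar) => [] [] [] [] /=; nra.
Qed.

Lemma samba_update_leader_gt0 : 0 < samba_update alpha p astar I Rw astar.
Proof.
rewrite samba_update_leaderE subr_gt0.
apply: (le_lt_trans (y := \sum_(b | b != astar)
                            (p b + alpha * p astar * (I b)%:R))).
  by apply: ler_sum => b; apply: samba_update_nonleader_le.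
have others_p : \sum_(b | b != astar) p b = 1 - p astar.
  by move: p_sum1; rewrite (bigD1 astar) //=; lra.
have others_I : \sum_(b | b != astar) ((I b)%:R : R) <= 1.
  by rewrite -[leRHS]played_once [leRHS](bigD1 astar) //= lerDr ler0n.
rewrite big_split /= -mulr_sumr others_p.
have : alpha * p astar < p astar by rewrite gtr_pMl.
have := ler_wpM2l (mulr_ge0 alpha_ge0 (ltW (p_gt0 astar))) others_I.
lra.
Qed.

End Positivity.

Theorem lemma21 (A : finType) (R : realFieldType) (alpha : R)
    (p : A -> R) (astar : A) (I Rw : A -> bool) :
  0 < alpha < 1 ->
  (forall a, 0 < p a) ->
  \sum_a p a = 1 ->
  (forall a, p a <= p astar) ->
  \sum_a ((I a)%:R : R) = 1 ->
  (forall a, 0 < samba_update alpha p astar I Rw a) /\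
  \sum_a samba_update alpha p astar I Rw a = 1.
Proof.
move=> /andP[/ltW alpha_ge0 alpha_lt1] p_gt0 p_sum1 p_le_leader played_once.
split; last exact: samba_update_sum.
move=> a; have [->|na] := eqVneq a astar.
  exact: samba_update_leader_gt0.
exact: samba_update_nonleader_gt0.
Qed.
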